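(* For all real $\nu\geq\frac{e^2}{2(e-2)}$ and all real $z$ with $0<z\leq 1$, $$K_\nu(z)<\left(\frac{\nu}{z}\right)^{\nu}.$$
   Context: $K_\nu$ denotes the modified Bessel function of the second kind of real order $\nu$, for real argument $z>0$. *)

From Stdlib Require Import Reals.
From Coquelicot Require Import Coquelicot.
Open Scope R_scope.

(* Modified Bessel function of the second kind of real order nu, for z > 0,
   via the standard integral representation (DLMF 10.32.9):
     K_nu(z) = \int_0^\infty exp(-z cosh t) cosh(nu t) dt. *)
Definition BesselK (nu z : R) : R :=
  RInt_gen (fun t => exp (- z * cosh t) * cosh (nu * t))
           (at_point 0) (Rbar_locally p_infty).

(* Write c = z/(2 nu) and A = -(nu - 1)(1 + ln c).  For t >= 0 the integrand
   of K_nu(z) = \int_0^oo exp(-z cosh t) cosh(nu t) dt is bounded using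
   cosh t >= e^t/2, cosh(nu t) <= e^(nu t) and the tangent-line inequality
   (nu - 1)(t + ln c + 1) <= (nu - 1) c e^t, which together give
       exp(-z cosh t) cosh(nu t) <= e^A * exp(t - c e^t).
   The majorant has the explicit primitive -e^A exp(-c e^t)/c, so its
   integral over [0, oo) is e^A e^(-c)/c < e^A/c.  A comparison test for
   improper integrals (proved from the Cauchy criterion) transfers the bound
   to K_nu(z).  Finally e^A/c <= (nu/z)^nu amounts to nu (1 - ln 2) >= 1,
   which holds since the hypothesis forces nu >= 4 and ln 2 <= 3/4. *)

From Stdlib Require Import Reals Lra.
From Coquelicot Require Import Coquelicot.
Open Scope R_scope.

Lemma exp_le_compat x y : x <= y -> exp x <= exp y.
Proof. intros [Hlt | ->]; [left; exact (exp_increasing _ _ Hlt) | lra]. Qed.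

Lemma is_RInt_gen_partial (g : R -> R) (a L : R) :
  (forall x, continuous g x) ->
  is_RInt_gen g (at_point a) (Rbar_locally p_infty) L ->
  filterlim (fun b => RInt g a b) (Rbar_locally p_infty) (locally L).
Proof.
  intros g_cont g_int P HP.
  destruct (g_int P HP) as [Qa Qb HQa HQb HQ].
  change (Rbar_locally p_infty (fun b => P (RInt g a b))).
  apply (filter_imp Qb); [| exact HQb].
  intros b Hb. destruct (HQ a b HQa Hb) as [y [Hy HPy]].
  simpl in Hy. now rewrite (is_RInt_unique _ _ _ _ Hy).
Qed.

Lemma ex_RInt_gen_cauchy (f : R -> R) (a : R) :
  (forall x, continuous f x) ->
  (forall eps : posreal, exists M, forall b' b, M < b' <= b -> Rabs (RInt f b' b) < eps) ->
  exists l, is_RInt_gen f (at_point a) (Rbar_locally p_infty) l.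
Proof.
  intros f_cont f_tail.
  assert (f_ex : forall u v, ex_RInt f u v)
    by (intros; apply (ex_RInt_continuous (V := R_CompleteNormedModule)); auto).
  set (F := fun b => RInt f a b).
  set (H := filtermap F (Rbar_locally p_infty)).
  assert (H_proper : ProperFilter H)
    by apply filtermap_proper_filter, Rbar_locally_filter.
  assert (H_cauchy : cauchy H).
  { intros eps. destruct (f_tail eps) as [M HM].
    exists (F (M + 1)), (M + 1). intros b Hb.
    change (Rabs (F b - F (M + 1)) < eps).
    replace (F b - F (M + 1)) with (RInt f (M + 1) b).
    - apply HM; lra.
    - unfold F. rewrite <- (RInt_Chasles f a (M + 1) b) by apply f_ex.
      symmetry; apply Rplus_minus_l. }
  exists (lim H). intros P [eps HP].
  destruct (complete_cauchy (T := R_CompleteSpace) H H_proper H_cauchy eps) as [M HM].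
  apply Filter_prod with (fun u => u = a) (fun b => M < b); [reflexivity | now exists M |].
  intros u b -> Hb. exists (F b). split.
  - apply (RInt_correct (V := R_CompleteNormedModule)), f_ex.
  - apply HP, HM, Hb.
Qed.

Lemma is_RInt_gen_comparison (f g : R -> R) (a L : R) :
  (forall x, continuous f x) -> (forall x, continuous g x) ->
  (forall t, a <= t -> 0 <= f t <= g t) ->
  is_RInt_gen g (at_point a) (Rbar_locally p_infty) L ->
  exists l, is_RInt_gen f (at_point a) (Rbar_locally p_infty) l /\ l <= L.
Proof.
  intros f_cont g_cont f_le_g g_int.
  assert (cont_ex : forall h, (forall x, continuous h x) -> forall u v, ex_RInt h u v)
    by (intros; apply (ex_RInt_continuous (V := R_CompleteNormedModule)); auto).
  (* Tails of f are squeezed between 0 and tails of g, which are small since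
     the partial integrals of g converge. *)
  destruct (ex_RInt_gen_cauchy f a f_cont) as [l f_int].
  - intros eps.
    destruct (proj1 (filterlim_locally _ _) (is_RInt_gen_partial g a L g_cont g_int)
                (pos_div_2 eps)) as [M HM].
    exists (Rmax M a). intros b' b Hb.
    pose proof (Rmax_l M a) as HM_le. pose proof (Rmax_r M a) as Ha_le.
    assert (tail_f_ge_0 : 0 <= RInt f b' b)
      by (apply RInt_ge_0; [lra | apply cont_ex, f_cont | intros; apply f_le_g; lra]).
    assert (tail_f_le_g : RInt f b' b <= RInt g b' b)
      by (apply RInt_le; [lra | apply cont_ex, f_cont | apply cont_ex, g_cont | intros; apply f_le_g; lra]).
    assert (tail_g : RInt g b' b = RInt g a b - RInt g a b').
    { rewrite <- (RInt_Chasles g a b' b) by apply cont_ex, g_cont.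
      symmetry; apply Rplus_minus_l. }
    pose proof (HM b' ltac:(lra)) as Hb'_near. pose proof (HM b ltac:(lra)) as Hb_near.
    change (Rabs (RInt g a b' - L) < eps / 2) in Hb'_near.
    change (Rabs (RInt g a b - L) < eps / 2) in Hb_near.
    rewrite Rabs_pos_eq by lra.
    apply Rabs_def2 in Hb'_near, Hb_near. lra.
  - exists l. split; [exact f_int |].
    apply Rle_trans with (Rabs l); [apply Rle_abs |].
    apply (RInt_gen_norm (Fa := at_point a) (Fb := Rbar_locally p_infty) f g l L); auto.
    + apply Filter_prod with (fun u => u = a) (fun b => a < b); [reflexivity | now exists a |].
      intros u b -> Hb; simpl; lra.
    + apply Filter_prod with (fun u => u = a) (fun b => a < b); [reflexivity | now exists a |].
      intros u b -> Hb x Hx; simpl in Hx. change (Rabs (f x) <= g x).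
      destruct (f_le_g x (proj1 Hx)). rewrite Rabs_pos_eq; lra.
Qed.

Definition gumbel_primitive (c t : R) : R := - exp (- (c * exp t)) / c.

Lemma gumbel_primitive_derive (c t : R) : 0 < c ->
  is_derive (gumbel_primitive c) t (exp (t - c * exp t)).
Proof.
  intros Hc. unfold gumbel_primitive. auto_derive; [exact I |].
  replace (t - c * exp t) with (t + - (c * exp t)) by ring.
  rewrite exp_plus. field. lra.
Qed.

Lemma gumbel_primitive_lim (c : R) : 0 < c ->
  filterlim (gumbel_primitive c) (Rbar_locally p_infty) (locally 0).
Proof.
  intros Hc.
  assert (to_m_infty : is_lim (fun t => - (c * exp t)) p_infty m_infty).
  { assert (E : Rbar_opp (Rbar_mult c p_infty) = m_infty).
    { simpl. destruct Rle_dec; [destruct Rle_lt_or_eq_dec |]; simpl; auto; lra. }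
    rewrite <- E. apply is_lim_opp, is_lim_scal_l, is_lim_exp_p. }
  assert (to_0 : is_lim (fun t => exp (- (c * exp t))) p_infty 0).
  { apply (is_lim_comp exp _ p_infty 0 m_infty); [apply is_lim_exp_m | exact to_m_infty |].
    exists 0; intros; discriminate. }
  pose proof (is_lim_scal_r _ (- / c) _ _ to_0) as Hlim.
  simpl in Hlim. rewrite Rmult_0_l in Hlim.
  eapply filterlim_ext; [| exact Hlim]. intros t; unfold gumbel_primitive, Rdiv; ring.
Qed.

Lemma is_RInt_gen_gumbel (c a : R) : 0 < c ->
  is_RInt_gen (fun t => exp (t - c * exp t)) (at_point a) (Rbar_locally p_infty)
    (exp (- (c * exp a)) / c).
Proof.
  intros Hc.
  assert (everywhere : forall P : R * R -> Prop, (forall u v, P (u, v)) ->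
            filter_prod (at_point a) (Rbar_locally p_infty) P).
  { intros P HP. apply Filter_prod with (fun _ => True) (fun _ => True);
      [exact I | now exists 0 | intros; apply HP]. }
  apply is_RInt_gen_ext with (Derive (gumbel_primitive c)).
  { apply everywhere. intros u v x _. now apply is_derive_unique, gumbel_primitive_derive. }
  replace (exp (- (c * exp a)) / c) with (0 - gumbel_primitive c a)
    by (unfold gumbel_primitive; field; lra).
  apply is_RInt_gen_Derive.
  - apply everywhere. intros u v x _. eexists. now apply gumbel_primitive_derive.
  - apply everywhere. intros u v x _.
    apply continuous_ext with (fun t => exp (t - c * exp t)).
    + intros t. symmetry. now apply is_derive_unique, gumbel_primitive_derive.
    + apply (ex_derive_continuous (K := R_AbsRing) (V := R_NormedModule)).
      auto_derive. exact I.
  - intros P HP. exact (locally_singleton _ _ HP).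
  - now apply gumbel_primitive_lim.
Qed.

Definition bessel_integrand (nu z t : R) : R := exp (- z * cosh t) * cosh (nu * t).

Lemma bessel_integrand_continuous (nu z x : R) : continuous (bessel_integrand nu z) x.
Proof.
  apply (ex_derive_continuous (K := R_AbsRing) (V := R_NormedModule)).
  unfold bessel_integrand, cosh. auto_derive. exact I.
Qed.

Lemma half_exp_le_cosh (t : R) : exp t / 2 <= cosh t.
Proof. unfold cosh. pose proof (exp_pos (- t)). lra. Qed.

Lemma cosh_le_exp (x : R) : 0 <= x -> cosh x <= exp x.
Proof.
  intros Hx. unfold cosh. assert (exp (- x) <= exp x) by (apply exp_le_compat; lra). lra.
Qed.

(* Tangent-line inequality 1 + u <= e^u at u = t + ln c. *)
Lemma exp_tangent_bound (c t : R) : 0 < c -> t + ln c + 1 <= c * exp t.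
Proof.
  intros Hc. pose proof (exp_ineq1_le (t + ln c)) as Htan.
  rewrite exp_plus, exp_ln in Htan by exact Hc. lra.
Qed.

(* Rate c and shift A of the majorant e^A * exp(t - c e^t). *)
Definition bessel_rate (nu z : R) : R := z / (2 * nu).
Definition bessel_shift (nu z : R) : R := - (nu - 1) * (1 + ln (bessel_rate nu z)).

Lemma bessel_rate_pos (nu z : R) : 0 < nu -> 0 < z -> 0 < bessel_rate nu z.
Proof. intros. unfold bessel_rate. apply Rdiv_lt_0_compat; lra. Qed.

Lemma bessel_integrand_bound (nu z t : R) : 1 <= nu -> 0 < z -> 0 <= t ->
  0 <= bessel_integrand nu z t <=
  exp (bessel_shift nu z) * exp (t - bessel_rate nu z * exp t).
Proof.
  intros Hnu Hz Ht. unfold bessel_integrand.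
  set (c := bessel_rate nu z).
  assert (Hc : 0 < c) by (apply bessel_rate_pos; lra).
  assert (Hcosh : 0 < cosh (nu * t)).
  { unfold cosh. pose proof (exp_pos (nu * t)). pose proof (exp_pos (- (nu * t))). lra. }
  pose proof (exp_pos (- z * cosh t)) as Hexp.
  split; [nra |].
  apply Rle_trans with (exp (- z * (exp t / 2)) * exp (nu * t)).
  - apply Rmult_le_compat; try lra.
    + apply exp_le_compat. pose proof (half_exp_le_cosh t). nra.
    + apply cosh_le_exp. nra.
  - rewrite <- !exp_plus. apply exp_le_compat. unfold bessel_shift. fold c.
    assert (Hz_c : z = 2 * nu * c) by (unfold c, bessel_rate; field; lra).
    pose proof (Rmult_le_compat_l (nu - 1) _ _ ltac:(lra) (exp_tangent_bound c t Hc)).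
    rewrite Hz_c. nra.
Qed.

(* From the Taylor bound e^(3/4) >= 1 + 3/4 + (3/4)^2/2 > 2. *)
Lemma ln_2_le : ln 2 <= 3 / 4.
Proof.
  assert (Htaylor : 2 <= exp (3 / 4)).
  { pose proof (exp_ge_taylor (3 / 4) 2 ltac:(lra)) as H. simpl in H. lra. }
  rewrite <- (ln_exp (3 / 4)). apply ln_le; lra.
Qed.

(* The threshold of the theorem exceeds 4, because (e - 4)^2 >= 0. *)
Lemma threshold_ge_4 : 4 <= exp 1 ^ 2 / (2 * (exp 1 - 2)).
Proof.
  assert (He : 2 < exp 1) by (pose proof (exp_ineq1 1 ltac:(lra)); lra).
  apply Rmult_le_reg_r with (2 * (exp 1 - 2)); [lra |].
  unfold Rdiv. rewrite Rmult_assoc, Rinv_l, Rmult_1_r by lra.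
  pose proof (pow2_ge_0 (exp 1 - 4)). nra.
Qed.

(* e^A / c <= (nu/z)^nu; in logarithms this is nu ln 2 <= nu - 1. *)
Lemma majorant_constant_le (nu z : R) : 4 <= nu -> 0 < z ->
  exp (bessel_shift nu z) / bessel_rate nu z <= Rpower (nu / z) nu.
Proof.
  intros Hnu Hz.
  assert (ln_rate : ln (bessel_rate nu z) = ln z - ln 2 - ln nu).
  { unfold bessel_rate. rewrite ln_div, ln_mult by lra. ring. }
  assert (ln_ratio : ln (nu / z) = ln nu - ln z) by (apply ln_div; lra).
  unfold Rpower, Rdiv at 1.
  rewrite <- (exp_ln (bessel_rate nu z)) by (apply bessel_rate_pos; lra).
  rewrite <- exp_Ropp, <- exp_plus. apply exp_le_compat.
  unfold bessel_shift. rewrite ln_rate, ln_ratio.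
  pose proof ln_2_le. nra.
Qed.

Theorem mainTheorem6 (nu z : R) :
  exp 1 ^ 2 / (2 * (exp 1 - 2)) <= nu ->
  0 < z -> z <= 1 ->
  BesselK nu z < Rpower (nu / z) nu.
Proof.
  intros Hnu Hz _.
  assert (Hnu4 : 4 <= nu) by (pose proof threshold_ge_4; lra).
  set (c := bessel_rate nu z). set (A := bessel_shift nu z).
  assert (Hc : 0 < c) by (apply bessel_rate_pos; lra).
  assert (majorant_int : is_RInt_gen (fun t => exp A * exp (t - c * exp t))
                           (at_point 0) (Rbar_locally p_infty) (exp A * (exp (- c) / c))).
  { replace (- c) with (- (c * exp 0)) by (rewrite exp_0; ring).
    apply (is_RInt_gen_scal (fun t => exp (t - c * exp t)) (exp A)).
    now apply is_RInt_gen_gumbel. }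
  assert (majorant_cont : forall x, continuous (fun t => exp A * exp (t - c * exp t)) x).
  { intros x. apply (ex_derive_continuous (K := R_AbsRing) (V := R_NormedModule)).
    auto_derive. exact I. }
  destruct (is_RInt_gen_comparison (bessel_integrand nu z) _ 0 _
              (bessel_integrand_continuous nu z) majorant_cont
              ltac:(intros; apply bessel_integrand_bound; lra) majorant_int)
    as [l [K_int K_le]].
  assert (K_eq : BesselK nu z = l) by exact (is_RInt_gen_unique _ l K_int).
  assert (decay_lt_1 : exp (- c) < 1) by (rewrite <- exp_0; apply exp_increasing; lra).
  assert (constant_pos : 0 < exp A / c) by (apply Rdiv_lt_0_compat; [apply exp_pos | exact Hc]).
  rewrite K_eq. apply Rle_lt_trans with (exp A * (exp (- c) / c)); [exact K_le |].
  apply Rlt_le_trans with (exp A / c); [| exact (majorant_constant_le nu z Hnu4 Hz)].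
  replace (exp A * (exp (- c) / c)) with (exp A / c * exp (- c)) by (field; lra).
  nra.
Qed.
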